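(* For every language $L=\mathrm{LLin}_\ell(\pi,\sigma,\alpha,\theta)$ there exist $\alpha'\colon\Sigma^\ell\to\mathbb R_{\ge0}$ and $\theta'$ such that $L=\mathrm{LLin}_\ell(\pi,\sigma,\alpha',\theta')$ and: (1) $\theta'=1$; (2) there is a constant $\varepsilon>0$ such that for every $w\in\Sigma^*$, either $f'(w)<1-\varepsilon$ or $f'(w)>1+\varepsilon$, where $f'(w)=\sum_{m\in\Sigma^\ell}\alpha'(m)\,|w|_m$; (3) there is $k\in\mathbb N_0$ such that for every $m\in\Sigma^\ell$ there is $n\in\{0,1,\dots,2^k-1\}$ with $\alpha'(m)=k-\log_2(n+1)$.
   Context: $\Sigma$ is a finite alphabet. For a word $w$ and $\ell\in\mathbb N_0$, $p_\ell(w)$ (resp. $s_\ell(w)$) is the prefix (resp. suffix) of $w$ of length $\ell$ if $|w|\ge\ell$ and $w$ otherwise; $|w|_m$ is the number of occurrences of $m$ as an infix of $w$. For $\ell\in\mathbb N_0$, $\theta\in\mathbb R_{\ge0}$, $\pi,\sigma\subseteq\Sigma^{\le\ell-1}$ and $\alpha\colon\Sigma^\ell\to\mathbb R_{\ge0}$, $\mathrm{LLin}_\ell(\pi,\sigma,\alpha,\theta)$ is the set of $w\in\Sigma^+$ with $p_{\ell-1}(w)\in\pi$, $s_{\ell-1}(w)\in\sigma$ and $\sum_{m\in\Sigma^\ell}\alpha(m)|w|_m\le\theta$. *)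

From HB Require Import structures.
From mathcomp Require Import all_boot all_order all_algebra.
From mathcomp Require Import all_classical all_reals all_analysis.
Set Implicit Arguments. Unset Strict Implicit. Unset Printing Implicit Defensive.
Import Order.TTheory GRing.Theory Num.Theory.
Local Open Scope ring_scope.

Definition pref (Sigma : finType) (l : nat) (w : seq Sigma) : seq Sigma := take l w.
Definition suff (Sigma : finType) (l : nat) (w : seq Sigma) : seq Sigma :=
  drop (size w - l) w.

(* |w|_m : number of (possibly overlapping) occurrences of m as an infix of w,
   i.e. the number of positions i with i + |m| <= |w| and w[i..i+|m|) = m. *)
Definition count_infix (Sigma : finType) (m w : seq Sigma) : nat :=
  count (fun i => (i + size m <= size w)%N && (take (size m) (drop i w) == m))
        (iota 0 (size w).+1).

Definition lin_val (R : realType) (Sigma : finType) (l : nat)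
  (alpha : l.-tuple Sigma -> R) (w : seq Sigma) : R :=
  \sum_(m : l.-tuple Sigma) alpha m * (count_infix (tval m) w)%:R.

Definition LLin (R : realType) (Sigma : finType) (l : nat)
  (pi sigma : seq Sigma -> Prop) (alpha : l.-tuple Sigma -> R) (theta : R)
  (w : seq Sigma) : Prop :=
  (0 < size w)%N /\ pi (pref l.-1 w) /\ sigma (suff l.-1 w) /\
  lin_val alpha w <= theta.

Definition log2 (R : realType) (x : R) : R := ln x / ln 2.

From HB Require Import structures.
From mathcomp Require Import all_boot all_order all_algebra.
From mathcomp Require Import all_classical all_reals all_analysis.
From mathcomp Require Import ring lra.

Set Implicit Arguments.
Unset Strict Implicit.
Unset Printing Implicit Defensive.
Import Order.TTheory GRing.Theory Num.Theory.
Local Open Scope ring_scope.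
Local Open Scope classical_set_scope.

(* Since the weights are nonnegative, the values of f(w) = sum_m alpha(m) |w|_m
   are nonnegative integer combinations of finitely many fixed reals, so only
   finitely many of them lie below theta + 1: there is a gap (theta, theta + d)
   containing no value f(w).  Dividing alpha by t = theta + d/2 moves theta and
   theta + d to 1 - g and 1 + g.  Finally each scaled weight beta(m) is
   approximated from above, with relative error at most g/2, by a number
   k - log2 (n + 1) with n < 2^k (the same k for all m): the achievable values
   k - log2 j for 2^k e^(-(1+g/2) beta ln 2) <= j <= 2^k e^(-beta ln 2) form a
   nonempty range once 2^k is large.  Rounding up only grows f, and by a factor
   at most 1 + g/2, so the gap around 1 survives. *)

Section Log2.
Variable R : realType.

Let ln2_gt0 : 0 < ln (2 : R). Proof. by apply: ln_gt0; lra. Qed.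

Lemma ln_exp2n (k : nat) : ln ((2 ^ k)%:R : R) = k%:R * ln 2.
Proof. by rewrite natrX lnXn // mulr_natl. Qed.

Lemma log2_exp2n (k : nat) : log2 ((2 ^ k)%:R : R) = k%:R.
Proof. by rewrite /log2 ln_exp2n mulfK // gt_eqF. Qed.

Lemma ln_exp2n_expR (k : nat) (x : R) :
  ln ((2 ^ k)%:R * expR (- (x * ln 2))) = (k%:R - x) * ln 2.
Proof. by rewrite lnM ?posrE ?expR_gt0 ?ltr0n ?expn_gt0 // expRK ln_exp2n mulrBl. Qed.

Lemma le_sub_log2 (k : nat) (x z : R) : 0 < z ->
  (x <= k%:R - log2 z) = (z <= (2 ^ k)%:R * expR (- (x * ln 2))).
Proof.
move=> z0; rewrite -[RHS]ler_ln ?posrE ?mulr_gt0 ?expR_gt0 ?ltr0n ?expn_gt0 //.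
by rewrite ln_exp2n_expR /log2 -ler_pdivrMr // lerBrDr -lerBrDl.
Qed.

Lemma ge_sub_log2 (k : nat) (y z : R) : 0 < z ->
  (k%:R - log2 z <= y) = ((2 ^ k)%:R * expR (- (y * ln 2)) <= z).
Proof.
move=> z0; rewrite -[RHS]ler_ln ?posrE ?mulr_gt0 ?expR_gt0 ?ltr0n ?expn_gt0 //.
by rewrite ln_exp2n_expR /log2 -ler_pdivlMr // lerBlDr -lerBlDl.
Qed.

Lemma sub_log2_approx (x rho : R) : 0 <= x -> 0 < rho ->
  \forall k \near \oo, exists n : nat,
    (n < 2 ^ k)%N /\ x <= k%:R - log2 n.+1%:R <= (1 + rho) * x.
Proof.
move=> x_ge0 rho_gt0; have [->|x_neq0] := eqVneq x 0.
  apply: nearW => k; exists (2 ^ k).-1.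
  by rewrite prednK ?expn_gt0 // log2_exp2n subrr mulr0 lexx leqnn.
have x_gt0 : 0 < x by rewrite lt_def x_neq0.
pose e (y : R) := expR (- (y * ln 2)).
pose D := e x - e ((1 + rho) * x).
have D_gt0 : 0 < D.
  by rewrite subr_gt0 ltr_expR ltrN2 ltr_pM2r // ltr_pMl //; lra.
exists (Num.Def.archi_bound D^-1) => // k /= le_Kk; set P : R := (2 ^ k)%:R.
have PD_gt1 : 1 < P * D.
  rewrite -ltr_pdivrMr // div1r; apply: lt_le_trans (archi_boundP _) _.
    by rewrite invr_ge0 ltW.
  by rewrite /P ler_nat (leq_trans le_Kk) // ltnW // ltn_expl.
have a_ge0 : 0 <= P * e ((1 + rho) * x) by rewrite mulr_ge0 ?ler0n ?expR_ge0.
pose n := Num.Def.truncn (P * e ((1 + rho) * x)).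
have /andP [le_n_a lt_a_n] := truncn_itv a_ge0.
have le_n_b : n.+1%:R <= P * e x.
  rewrite -addn1 natrD; have : P * D = P * e x - P * e ((1 + rho) * x).
    by rewrite mulrBr.
  lra.
exists n; rewrite le_sub_log2 ?ge_sub_log2 ?ltr0n // le_n_b (ltW lt_a_n).
split=> //; rewrite -(ler_nat R) -/P (le_trans le_n_b) // ger_pMr.
  by rewrite expR_le1 oppr_le0 mulr_ge0 ?ltW.
by rewrite /P ltr0n expn_gt0.
Qed.

Lemma exists_sub_log2_weights (T : finType) (beta : T -> R) (rho : R) :
    (forall m, 0 <= beta m) -> 0 < rho ->
  exists (k : nat) (n : T -> nat), forall m, (n m < 2 ^ k)%N /\
    beta m <= k%:R - log2 (n m).+1%:R <= (1 + rho) * beta m.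
Proof.
move=> beta_ge0 rho_gt0.
have [k /= /choice [n Hn]] := filter_ex
  (filter_forall _ (fun m => sub_log2_approx (beta_ge0 m) rho_gt0)).
by exists k, n.
Qed.

End Log2.

Section NatCombinationGap.
Variables (R : realType) (I : Type) (a : I -> R).
Hypothesis a_ge0 : forall i, 0 <= a i.

Lemma natmul_sum_gap (s : seq I) (th : R) :
  \forall d \near 0^'+, forall c : I -> nat,
    \sum_(i <- s) a i * (c i)%:R <= th \/ th + d <= \sum_(i <- s) a i * (c i)%:R.
Proof.
elim: s th => [|i s IH] th.
  have [th_ge0|th_lt0] := lerP 0 th.
    by apply: nearW => d c; left; rewrite big_nil.
  apply: filterS (nbhs_right_lt (_ : 0 < - th)); last lra.
  by move=> d lt_d_th c; right; rewrite big_nil; lra.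
have [ai0|ai_neq0] := eqVneq (a i) 0.
  by apply: filterS (IH th) => d gap_d c; rewrite big_cons ai0 mul0r add0r.
have ai_gt0 : 0 < a i by rewrite lt_def ai_neq0 a_ge0.
pose K := Num.Def.archi_bound (`|th| / a i).
have K_gap : 0 < a i * K%:R - th.
  rewrite subr_gt0 mulrC -ltr_pdivrMr //.
  apply: le_lt_trans (archi_boundP (divr_ge0 (normr_ge0 th) (ltW ai_gt0))).
  by rewrite ler_pM2r ?invr_gt0 // ler_norm.
(* below K copies of a i we use the gaps at th - a i * j, beyond it the sum is large *)
apply: filterS2 (filter_forall _ (fun j : 'I_K => IH (th - a i * j%:R)))
  (nbhs_right_lt K_gap).
move=> d gap_d lt_d_K c; rewrite big_cons.
have sum_ge0 : 0 <= \sum_(j <- s) a j * (c j)%:R.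
  by apply: sumr_ge0 => j _; rewrite mulr_ge0.
have [lt_ci_K|le_K_ci] := ltnP (c i) K.
  by case: (gap_d (Ordinal lt_ci_K) c) => /= ?; [left | right]; lra.
right; have : a i * K%:R <= a i * (c i)%:R by rewrite ler_pM2l // ler_nat.
lra.
Qed.

End NatCombinationGap.

Section LinVal.
Variables (R : realType) (Sigma : finType) (l : nat).
Implicit Types (alpha beta : l.-tuple Sigma -> R) (w : seq Sigma).

Lemma lin_valZl (c : R) alpha w :
  lin_val (fun m => c * alpha m) w = c * lin_val alpha w.
Proof. by rewrite /lin_val mulr_sumr; apply: eq_bigr => m _; rewrite mulrA. Qed.

Lemma lin_val_sandwich alpha beta (rho : R) w :
    (forall m, alpha m <= beta m <= (1 + rho) * alpha m) ->
  lin_val alpha w <= lin_val beta w <= (1 + rho) * lin_val alpha w.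
Proof.
move=> le_ab; rewrite -lin_valZl; apply/andP; split; apply: ler_sum => m _;
  by apply: ler_wpM2r => //; case/andP: (le_ab m).
Qed.

Lemma LLin_lin_val_iff pi sigma alpha beta (theta theta' : R) w :
    (lin_val alpha w <= theta <-> lin_val beta w <= theta') ->
  LLin pi sigma alpha theta w <-> LLin pi sigma beta theta' w.
Proof.
move=> [ab ba]; rewrite /LLin.
by split=> -[w_gt0 [pi_w [sigma_w le_w]]]; do 3 (split=> //); [apply: ab | apply: ba].
Qed.

Lemma lin_val_gap alpha (theta : R) : (forall m, 0 <= alpha m) ->
  exists2 d : R, 0 < d &
    forall w, lin_val alpha w <= theta \/ theta + d <= lin_val alpha w.
Proof.
move=> alpha_ge0; have [d [d_gt0 gap_d]] := filter_ex
  (filterS2 _ (fun d (d_gt0 : 0 < d) gap_d => conj d_gt0 gap_d)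
     (nbhs_right_gt 0) (natmul_sum_gap alpha_ge0 (index_enum _) theta)).
by exists d => // w; apply: (gap_d (fun m => count_infix (tval m) w)).
Qed.

End LinVal.

Lemma scale_gap_to_one (R : realFieldType) (theta d : R) : 0 <= theta -> 0 < d ->
  exists2 t : R, 0 < t & exists2 g : R, 0 < g &
    t^-1 * theta = 1 - g /\ t^-1 * (theta + d) = 1 + g.
Proof.
move=> theta_ge0 d_gt0; have t_gt0 : 0 < theta + d / 2 by lra.
exists (theta + d / 2) => //; exists (d / (2 * (theta + d / 2))).
  by rewrite divr_gt0 // mulr_gt0.
by split; field; rewrite gt_eqF //; lra.
Qed.

Theorem mainTheorem10 (R : realType) (Sigma : finType) (l : nat)
  (pi sigma : seq Sigma -> Prop)
  (Hpi : forall u, pi u -> (size u <= l.-1)%N)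
  (Hsigma : forall u, sigma u -> (size u <= l.-1)%N)
  (alpha : l.-tuple Sigma -> R) (Halpha : forall m, 0 <= alpha m)
  (theta : R) (Htheta : 0 <= theta) :
  exists (alpha' : l.-tuple Sigma -> R) (theta' : R),
    (forall m, 0 <= alpha' m) /\ 0 <= theta' /\
    (forall w, LLin pi sigma alpha theta w <-> LLin pi sigma alpha' theta' w) /\
    theta' = 1 /\
    (exists eps : R, 0 < eps /\
       forall w : seq Sigma,
         lin_val alpha' w < 1 - eps \/ lin_val alpha' w > 1 + eps) /\
    (exists k : nat, forall m : l.-tuple Sigma,
       exists n : nat, (n < 2 ^ k)%N /\ alpha' m = k%:R - log2 (n.+1)%:R).
Proof.
have [d d_gt0 gap_d] := lin_val_gap theta Halpha.
have [t t_gt0 [g g_gt0 [theta_t theta_d_t]]] := scale_gap_to_one Htheta d_gt0.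
have tV_ge0 : 0 <= t^-1 by rewrite invr_ge0 ltW.
have beta_ge0 m : 0 <= t^-1 * alpha m by rewrite mulr_ge0.
have rho_gt0 : 0 < g / 2 by lra.
have [k [n Hn]] := exists_sub_log2_weights beta_ge0 rho_gt0.
pose alpha' m : R := k%:R - log2 (n m).+1%:R.
have alpha'_ge0 m : 0 <= alpha' m.
  by case: (Hn m) => _ /andP [+ _]; apply: le_trans.
have sandwich w : t^-1 * lin_val alpha w <= lin_val alpha' w
                     <= (1 + g / 2) * (t^-1 * lin_val alpha w).
  by rewrite -lin_valZl; apply: lin_val_sandwich => m; case: (Hn m).
have below w : lin_val alpha w <= theta -> lin_val alpha' w < 1 - g / 4.
  by move=> /(ler_wpM2l tV_ge0); rewrite theta_t; have /andP [] := sandwich w; nra.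
have above w : theta + d <= lin_val alpha w -> 1 + g / 4 < lin_val alpha' w.
  by move=> /(ler_wpM2l tV_ge0); rewrite theta_d_t; have /andP [] := sandwich w; lra.
exists alpha', 1; do 2 (split=> //); split.
  move=> w; apply: LLin_lin_val_iff; split=> [/below|]; first lra.
  by case: (gap_d w) => // /above; lra.
split=> //; split; last by exists k => m; exists (n m); case: (Hn m).
by exists (g / 4); split=> [|w]; [lra | case: (gap_d w) => [/below|/above]; auto].
Qed.
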